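(* Let $\mathcal{X},\mathcal{Y},\mathcal{A},\mathcal{B}$ be systems with $\mathcal{X}$ trivial ($\mathsf{T}[\mathcal{X}]=\mathsf{I}$) and $\mathcal{A}$ classical ($\mathsf{T}[\mathcal{A}]=\mathsf{C}$), while $\mathcal{Y}$ and $\mathcal{B}$ have arbitrary types and dimensions. Then the resource type $\mathsf{I}\,\mathsf{T}[\mathcal{Y}]\rightarrow\mathsf{C}\,\mathsf{T}[\mathcal{B}]$ is $\mathsf{T}$-trivial: every nonsignaling resource $R_{\mathcal{A}\mathcal{B}|\mathcal{X}\mathcal{Y}}$ of this type (and these dimensions) is LOSR-free.
   Context: A system $\mathcal{H}$ is specified by a dimension $d[\mathcal{H}]\ge 1$ (Hilbert space $\mathbb{C}^{d[\mathcal{H}]}$ with computational basis $\{|i\rangle\}$) and a type $\mathsf{T}[\mathcal{H}]\in\{\mathsf{I},\mathsf{C},\mathsf{Q}\}$ (trivial, classical, quantum); a system is trivial iff its dimension is $1$. $\mathsf{D}(\mathcal{H})$ denotes density matrices. A (bipartite nonsignaling) resource with Alice's input $\mathcal{X}$ and output $\mathcal{A}$ and Bob's input $\mathcal{Y}$ and output $\mathcal{B}$ is a linear map $R$ from operators on $\mathcal{X}\otimes\mathcal{Y}$ to operators on $\mathcal{A}\otimes\mathcal{B}$ which is completely positive, satisfies $\mathrm{tr}\,R[\xi\otimes\psi]=1$ for all $\xi\in\mathsf{D}(\mathcal{X}),\psi\in\mathsf{D}(\mathcal{Y})$, and is nonsignaling: $\mathrm{tr}_{\mathcal{A}}R[\xi\otimes\psi]$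 does not depend on $\xi$ and $\mathrm{tr}_{\mathcal{B}}R[\xi\otimes\psi]$ does not depend on $\psi$. If an output, say $\mathcal{A}$, is classical then $\langle i_{\mathcal{A}}|R[\xi\otimes\psi]|j_{\mathcal{A}}\rangle=0$ for all $i\ne j$, $\xi,\psi$; if an input, say $\mathcal{X}$, is classical then $R[|i_{\mathcal{X}}\rangle\langle j_{\mathcal{X}}|\otimes\psi]=0$ for all $i\neq j$ and $\psi$ (analogously for $\mathcal{B}$, $\mathcal{Y}$). The type of $R$ is written $\mathsf{T}[\mathcal{X}]\mathsf{T}[\mathcal{Y}]\rightarrow\mathsf{T}[\mathcal{A}]\mathsf{T}[\mathcal{B}]$. A single-party resource $R_{\mathcal{A}|\mathcal{X}}$ is a CPTP map from operators on $\mathcal{X}$ to operators on $\mathcal{A}$ satisfying the analogous classicality constraints. A resource is LOSR-free if $R_{\mathcal{A}\mathcal{B}|\mathcal{X}\mathcal{Y}}=\sum_i p_i\,R^i_{\mathcal{A}|\mathcal{X}}\otimes R^i_{\mathcal{B}|\mathcal{Y}}$ for a probability distribution $(p_i)$ and single-party resources of the corresponding types and dimensions. A resource type is $\mathsf{T}$-trivial if every resource of that type is LOSR-free. *)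

From HB Require Import structures.
From mathcomp Require Import all_boot all_order all_algebra.
From mathcomp Require Import mxtens.

Set Implicit Arguments.
Unset Strict Implicit.
Unset Printing Implicit Defensive.

Import Order.TTheory GRing.Theory Num.Theory.
Local Open Scope ring_scope.

Inductive stype := TI | TC | TQ.

Definition wf_sys (d : nat) (t : stype) : Prop :=
  (0 < d)%N /\ (t = TI <-> d = 1%N).

Section Quantum.
Variable C : numClosedFieldType.

Definition adjmx m n (A : 'M[C]_(m, n)) : 'M[C]_(n, m) := (map_mx Num.conj A)^T.

Definition psd n (A : 'M[C]_n) : Prop :=
  forall v : 'cV[C]_n, 0 <= (adjmx v *m A *m v) 0 0.

Definition density n (rho : 'M[C]_n) : Prop := psd rho /\ \tr rho = 1.

(** amplification id_k (x) Phi, acting on 'M_(k * n) = M_k (x) M_n *)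
Definition ampl k n m (Phi : 'M[C]_n -> 'M[C]_m) (M : 'M[C]_(k * n))
  : 'M[C]_(k * m) :=
  \sum_(i < k) \sum_(j < k)
     (delta_mx i j *t Phi (\matrix_(a, b) M (mxtens_index (i, a))
                                            (mxtens_index (j, b)))).

Definition completely_positive n m (Phi : 'M[C]_n -> 'M[C]_m) : Prop :=
  forall (k : nat) (M : 'M[C]_(k * n)), psd M -> psd (ampl Phi M).

Definition ptrA dA dB (M : 'M[C]_(dA * dB)) : 'M[C]_dB :=
  \matrix_(b, b') \sum_(a < dA) M (mxtens_index (a, b)) (mxtens_index (a, b')).
Definition ptrB dA dB (M : 'M[C]_(dA * dB)) : 'M[C]_dA :=
  \matrix_(a, a') \sum_(b < dB) M (mxtens_index (a, b)) (mxtens_index (a', b)).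

Definition single_resource dX dA (tX tA : stype)
  (Phi : 'M[C]_dX -> 'M[C]_dA) : Prop :=
  [/\ linear Phi,
      completely_positive Phi,
      (forall M, \tr (Phi M) = \tr M),
      (tA = TC -> forall xi, density xi ->
         forall i j : 'I_dA, i != j -> Phi xi i j = 0) &
      (tX = TC -> forall i j : 'I_dX, i != j -> Phi (delta_mx i j) = 0)].

Definition resource dX dY dA dB (tX tY tA tB : stype)
  (R : 'M[C]_(dX * dY) -> 'M[C]_(dA * dB)) : Prop :=
  [/\ linear R /\ completely_positive R,
      (forall xi psi, density xi -> density psi -> \tr (R (xi *t psi)) = 1),
      (forall xi xi' psi, density xi -> density xi' -> density psi ->
         ptrA (R (xi *t psi)) = ptrA (R (xi' *t psi))),
      (forall xi psi psi', density xi -> density psi -> density psi' ->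
         ptrB (R (xi *t psi)) = ptrB (R (xi *t psi'))) &
      [/\ (tA = TC -> forall xi psi, density xi -> density psi ->
            forall (i j : 'I_dA) (b b' : 'I_dB), i != j ->
              R (xi *t psi) (mxtens_index (i, b)) (mxtens_index (j, b')) = 0),
          (tB = TC -> forall xi psi, density xi -> density psi ->
            forall (a a' : 'I_dA) (i j : 'I_dB), i != j ->
              R (xi *t psi) (mxtens_index (a, i)) (mxtens_index (a', j)) = 0),
          (tX = TC -> forall psi, density psi ->
            forall i j : 'I_dX, i != j -> R (delta_mx i j *t psi) = 0) &
          (tY = TC -> forall xi, density xi ->
            forall i j : 'I_dY, i != j -> R (xi *t delta_mx i j) = 0)]].

Definition tens_map dX dY dA dB
  (PhiA : 'M[C]_dX -> 'M[C]_dA) (PhiB : 'M[C]_dY -> 'M[C]_dB)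
  (M : 'M[C]_(dX * dY)) : 'M[C]_(dA * dB) :=
  \sum_(x < dX) \sum_(x' < dX) \sum_(y < dY) \sum_(y' < dY)
    M (mxtens_index (x, y)) (mxtens_index (x', y'))
      *: (PhiA (delta_mx x x') *t PhiB (delta_mx y y')).

Definition losr_free dX dY dA dB (tX tY tA tB : stype)
  (R : 'M[C]_(dX * dY) -> 'M[C]_(dA * dB)) : Prop :=
  exists (n : nat) (p : 'I_n -> C)
         (RA : 'I_n -> 'M[C]_dX -> 'M[C]_dA)
         (RB : 'I_n -> 'M[C]_dY -> 'M[C]_dB),
    [/\ (forall i, 0 <= p i),
        \sum_(i < n) p i = 1,
        (forall i, single_resource tX tA (RA i)),
        (forall i, single_resource tY tB (RB i)) &
        (forall M, R M = \sum_(i < n) p i *: tens_map (RA i) (RB i) M)].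

Definition T_trivial dX dY dA dB (tX tY tA tB : stype) : Prop :=
  forall R : 'M[C]_(dX * dY) -> 'M[C]_(dA * dB),
    resource tX tY tA tB R -> losr_free tX tY tA tB R.

End Quantum.

From HB Require Import structures.
From mathcomp Require Import all_boot all_order all_algebra.
From mathcomp Require Import mxtens ring.

(* With a trivial input, Alice's side of R is just the output register a, which
   is classical, so every output R (1 (x) N) is block diagonal with blocks
   B_a(N) acting on Bob's system alone. Nonsignaling from Bob to Alice forces
   tr B_a(N) = p_a tr N for constants p_a >= 0 summing to 1, hence
   R = sum_a p_a |a><a| (x) B_a / p_a is a mixture of products of the
   deterministic preparation of a with the channels B_a / p_a. All identities
   are first obtained on density matrices, which span all matrices. *)

Set Implicit Arguments.
Unset Strict Implicit.
Unset Printing Implicit Defensive.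

Import Order.TTheory GRing.Theory Num.Theory.
Local Open Scope ring_scope.

Section LinearMaps.
Variables (R : pzRingType) (U V : lmodType R) (f : U -> V).
Hypothesis f_lin : linear f.

Lemma linD u v : f (u + v) = f u + f v.
Proof. by have := f_lin 1 u v; rewrite !scale1r. Qed.

Lemma lin0 : f 0 = 0.
Proof. by apply: (addrI (f 0)); rewrite -linD !addr0. Qed.

Lemma linZ a u : f (a *: u) = a *: f u.
Proof. by have := f_lin a u 0; rewrite !addr0 lin0 addr0. Qed.

Lemma linB u v : f (u - v) = f u - f v.
Proof. by rewrite addrC -scaleN1r f_lin scaleN1r addrC. Qed.

Lemma lin_sum (I : finType) (F : I -> U) : f (\sum_i F i) = \sum_i f (F i).
Proof. exact: (big_morph f linD lin0). Qed.

Lemma linear_comp (W : lmodType R) (g : V -> W) :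
  linear g -> linear (fun u => g (f u)).
Proof. by move=> g_lin a u v; rewrite f_lin g_lin. Qed.

End LinearMaps.

Section Matrices.
Variable R : comPzRingType.

Lemma mxtrace_delta n (i j : 'I_n) : \tr (delta_mx i j : 'M[R]_n) = (i == j)%:R.
Proof.
rewrite /mxtrace (bigD1 i) //= big1 => [|k /negbTE ki]; last by rewrite mxE ki.
by rewrite mxE eqxx addr0.
Qed.

Definition tens_block m1 n1 m2 n2 (M : 'M[R]_(m1 * n1, m2 * n2)) i j : 'M[R]_(n1, n2) :=
  \matrix_(a, b) M (mxtens_index (i, a)) (mxtens_index (j, b)).

Lemma tens_blockP m1 n1 m2 n2 (A B : 'M[R]_(m1 * n1, m2 * n2)) :
  (forall i j, tens_block A i j = tens_block B i j) -> A = B.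
Proof.
move=> AB; apply/matrixP => r s.
case: (mxtens_indexP r) => i a; case: (mxtens_indexP s) => j b.
by have /matrixP/(_ a b) := AB i j; rewrite !mxE.
Qed.

Lemma tens_block_linear m1 n1 m2 n2 i j :
  linear (fun M : 'M[R]_(m1 * n1, m2 * n2) => tens_block M i j).
Proof. by move=> c A B; apply/matrixP => a b; rewrite !mxE. Qed.

Lemma tens_block_tensmx m1 n1 m2 n2 (A : 'M[R]_(m1, m2)) (B : 'M[R]_(n1, n2)) i j :
  tens_block (A *t B) i j = A i j *: B.
Proof. by apply/matrixP => a b; rewrite mxE tensmxE mxE. Qed.

Lemma tensmx_linear m1 n1 m2 n2 (A : 'M[R]_(m1, m2)) :
  linear (fun B : 'M[R]_(n1, n2) => A *t B).
Proof. by move=> c B B'; apply/matrixP => r s; rewrite !mxE; ring. Qed.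

Lemma scalemx_linear m n (c : R) : linear (fun A : 'M[R]_(m, n) => c *: A).
Proof. by move=> a A B; rewrite scalerDr !scalerA mulrC. Qed.

Lemma tensmx_block_diag m n (M : 'M[R]_(m * n)) :
  (forall i j, i != j -> tens_block M i j = 0) ->
  M = \sum_i delta_mx i i *t tens_block M i i.
Proof.
move=> offdiag0; apply: tens_blockP => i j.
rewrite (lin_sum (tens_block_linear i j)).
under eq_bigr => k _ do rewrite tens_block_tensmx mxE.
have [<-|ij] := eqVneq i j.
  rewrite (bigD1 i) //= big1 => [|k ki]; last by rewrite eq_sym (negbTE ki) scale0r.
  by rewrite eqxx scale1r addr0.
rewrite offdiag0 // big1 // => k _.
suff -> : (i == k) && (j == k) = false by rewrite scale0r.
by apply: contraNF ij => /andP[/eqP -> /eqP ->].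
Qed.

Lemma mxtrace_tens_block m n (M : 'M[R]_(m * n)) :
  \tr M = \sum_i \tr (tens_block M i i).
Proof.
rewrite /mxtrace; under [RHS]eq_bigr => i _ do under eq_bigr => a _ do rewrite mxE.
rewrite pair_big (reindex (@mxtens_index m n)) /=; first by apply: eq_bigr => -[i a].
by exists (@mxtens_unindex m n) => k _; [apply: mxtens_indexK | apply: mxtens_unindexK].
Qed.

End Matrices.

Section PositiveMatrices.
Variable C : numClosedFieldType.

Lemma adjmxE m n (A : 'M[C]_(m, n)) i j : adjmx A i j = (A j i)^*.
Proof. by rewrite !mxE. Qed.

Lemma adjmxM m n p (A : 'M[C]_(m, n)) (B : 'M[C]_(n, p)) :
  adjmx (A *m B) = adjmx B *m adjmx A.
Proof. by rewrite /adjmx map_mxM trmx_mul. Qed.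

Lemma adjmxK m n (A : 'M[C]_(m, n)) : adjmx (adjmx A) = A.
Proof. by apply/matrixP => i j; rewrite !adjmxE conjCK. Qed.

Definition congrmx n m (f : 'I_m -> 'I_n) (w : 'I_m -> C) (A : 'M[C]_n) : 'M[C]_m :=
  \matrix_(r, s) ((w r)^* * A (f r) (f s) * w s).

Lemma congrmxE n m (f : 'I_m -> 'I_n) (w : 'I_m -> C) (A : 'M[C]_n) :
  let P : 'M[C]_(n, m) := \matrix_(t, r) ((t == f r)%:R * w r) in
  congrmx f w A = adjmx P *m A *m P.
Proof.
move=> P; apply/matrixP => r s; rewrite !mxE (bigD1 (f s)) //= big1 => [|t /negbTE ts].
  rewrite addr0 !mxE eqxx mul1r (bigD1 (f r)) //= big1 => [|t /negbTE tr].
    by rewrite addr0 !mxE eqxx mul1r.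
  by rewrite !mxE tr mul0r rmorph0 mul0r.
by rewrite !mxE ts mul0r mulr0.
Qed.

Lemma psd_congrmx n m (f : 'I_m -> 'I_n) (w : 'I_m -> C) (A : 'M[C]_n) :
  psd A -> psd (congrmx f w A).
Proof. by move=> A_psd v; rewrite congrmxE -!mulmxA mulmxA -adjmxM mulmxA. Qed.

Lemma psd_pair n (A : 'M[C]_n) i j s : psd A ->
  0 <= s^* * A i i * s + s^* * A i j + A j i * s + A j j.
Proof.
move=> A_psd; pose f (k : 'I_2) := if k == 0 then i else j.
have := psd_congrmx f (fun _ => 1) A_psd (\col_k (if k == 0 then s else 1)).
rewrite !(big_ord_recl, big_ord0, addr0, mxE) /f /= conjC1 !mulr1 !mul1r.
by congr (0 <= _); ring.
Qed.

Lemma psd_diag_ge0 n (A : 'M[C]_n) i : psd A -> 0 <= A i i.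
Proof. by move/(psd_pair i i 0); rewrite rmorph0 !mul0r mulr0 !add0r. Qed.

Lemma psd_diag0_entry n (A : 'M[C]_n) i j :
  psd A -> A i i = 0 -> A j j = 0 -> A i j = 0.
Proof.
move=> A_psd Aii Ajj.
have form s : 0 <= s^* * A i j + A j i * s.
  by have := psd_pair i j s A_psd; rewrite Aii Ajj mulr0 mul0r add0r addr0.
have form0 s : s^* * A i j + A j i * s = 0.
  apply/eqP; rewrite eq_le -oppr_ge0 form andbT.
  by have := form (- s); rewrite rmorphN /= mulNr mulrN -opprD.
have sym : A j i = A i j.
  have /eqP := form0 'i; rewrite conjCi mulNr mulrC addrC subr_eq0 => /eqP.
  exact: (mulIf (neq0Ci C)).
have := form0 1; rewrite rmorph1 mul1r mulr1 sym -mulr2n => /eqP.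
by rewrite mulrn_eq0 => /eqP.
Qed.

Lemma psd_trace0 n (A : 'M[C]_n) : psd A -> \tr A = 0 -> A = 0.
Proof.
move=> A_psd trA0.
have diag0 i : A i i = 0.
  by apply: (psumr_eq0P (P := predT) (F := fun i => A i i)) => // k _; apply: psd_diag_ge0.
by apply/matrixP => i j; rewrite mxE; apply: psd_diag0_entry.
Qed.

Lemma mxtrace_psd_ge0 n (A : 'M[C]_n) : psd A -> 0 <= \tr A.
Proof. by move=> A_psd; apply: sumr_ge0 => i _; apply: psd_diag_ge0. Qed.

Lemma psdZ n (A : 'M[C]_n) c : 0 <= c -> psd A -> psd (c *: A).
Proof. by move=> c_ge0 A_psd v; rewrite -scalemxAr -scalemxAl mxE mulr_ge0. Qed.

Definition dyad n (u : 'cV[C]_n) : 'M[C]_n := u *m adjmx u.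

Lemma dyadE n (u : 'cV[C]_n) r s : dyad u r s = u r 0 * (u s 0)^*.
Proof. by rewrite !mxE big_ord1 adjmxE. Qed.

Lemma psd_dyad n (u : 'cV[C]_n) : psd (dyad u).
Proof.
move=> v; have -> : adjmx v *m dyad u *m v = adjmx (adjmx u *m v) *m (adjmx u *m v).
  by rewrite adjmxM adjmxK /dyad !mulmxA.
by rewrite mxE big_ord1 adjmxE mulrC mul_conjC_ge0.
Qed.

Lemma delta_mx_polar n (i j : 'I_n) :
  let e k : 'cV[C]_n := delta_mx k 0 in
  delta_mx i j *+ 2 = dyad (e i + e j) + 'i *: dyad (e i + 'i *: e j)
                      - (1 + 'i) *: (dyad (e i) + dyad (e j)).
Proof.
move=> e; apply/matrixP => r s; rewrite {}/e !(dyadE, mxE).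
rewrite !rmorphD !rmorphM /= conjCi !rmorph_nat.
have ii : 'i * 'i = -1 :> C by rewrite -expr2 sqrCi.
by case: (r == i); case: (r == j); case: (s == i); case: (s == j); rewrite /=; ring: ii.
Qed.

Lemma density_delta n (i : 'I_n) : density (delta_mx i i : 'M[C]_n).
Proof.
split; last by rewrite mxtrace_delta eqxx.
have -> : delta_mx i i = dyad (delta_mx i 0 : 'cV[C]_n).
  apply/matrixP => r s; rewrite dyadE !mxE rmorph_nat -natrM.
  by case: (r == i); case: (s == i).
exact: psd_dyad.
Qed.

Lemma density1 : density (1%:M : 'M[C]_1).
Proof.
have -> : 1%:M = delta_mx 0 0 :> 'M[C]_1 by apply/matrixP => i j; rewrite !mxE !ord1.
exact: density_delta.
Qed.

Lemma density_span n (V : lmodType C) (f : 'M[C]_n -> V) : linear f ->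
  (forall rho, density rho -> f rho = 0) -> forall N, f N = 0.
Proof.
move=> f_lin f_density.
have f_psd P : psd P -> f P = 0.
  move=> P_psd; have [trP0|trP_neq0] := eqVneq (\tr P) 0.
    by rewrite (psd_trace0 P_psd trP0) (lin0 f_lin).
  have -> : P = \tr P *: ((\tr P)^-1 *: P) by rewrite scalerA divff // scale1r.
  rewrite (linZ f_lin) f_density ?scaler0 //.
  split; last by rewrite mxtraceZ mulVf.
  by apply: psdZ => //; rewrite invr_ge0 mxtrace_psd_ge0.
have f_dyad u : f (dyad u) = 0 := f_psd _ (psd_dyad u).
have f_delta i j : f (delta_mx i j) = 0.
  suff /eqP : 2%:R *: f (delta_mx i j) = 0 by rewrite scaler_eq0 pnatr_eq0 => /eqP.
  rewrite -(linZ f_lin) scaler_nat delta_mx_polar !(linB f_lin, linD f_lin, linZ f_lin) !f_dyad.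
  by rewrite !(scaler0, addr0, subr0).
move=> N; rewrite (matrix_sum_delta N) (lin_sum f_lin) big1 // => i _.
by rewrite (lin_sum f_lin) big1 // => j _; rewrite (linZ f_lin) f_delta scaler0.
Qed.

End PositiveMatrices.

Section CompletelyPositiveMaps.
Variable C : numClosedFieldType.

Lemma ptrB_tens_block m n (M : 'M[C]_(m * n)) i j : ptrB M i j = \tr (tens_block M i j).
Proof. by rewrite mxE; apply: eq_bigr => b _; rewrite mxE. Qed.

Lemma tens_block_ampl k n m (Phi : 'M[C]_n -> 'M[C]_m) (M : 'M[C]_(k * n)) i j :
  tens_block (ampl Phi M) i j = Phi (tens_block M i j).
Proof.
have blk_lin := lin_sum (tens_block_linear i j).
rewrite /ampl blk_lin (bigD1 i) //= [X in _ + X]big1 => [|i' i'i]; last first.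
  rewrite blk_lin big1 // => j' _.
  by rewrite tens_block_tensmx mxE eq_sym (negbTE i'i) scale0r.
rewrite addr0 blk_lin (bigD1 j) //= [X in _ + X]big1 => [|j' j'j]; last first.
  by rewrite tens_block_tensmx mxE eq_sym (negbTE j'j) andbF scale0r.
by rewrite tens_block_tensmx mxE !eqxx scale1r addr0.
Qed.

Lemma tens_block_congrmx m n (M : 'M[C]_(m * n)) i :
  tens_block M i i = congrmx (fun a => mxtens_index (i, a)) (fun _ => 1) M.
Proof. by apply/matrixP => a b; rewrite !mxE conjC1 mul1r mulr1. Qed.

Lemma psd_tens_block m n (M : 'M[C]_(m * n)) i : psd M -> psd (tens_block M i i).
Proof. by rewrite tens_block_congrmx; apply: psd_congrmx. Qed.

Lemma tensmx1l_congrmx n (N : 'M[C]_n) :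
  (1%:M : 'M_1) *t N = congrmx (fun r : 'I_(1 * n) => (mxtens_unindex r).2) (fun _ => 1) N.
Proof.
apply/matrixP => r s; rewrite !mxE [(mxtens_unindex r).1]ord1 [(mxtens_unindex s).1]ord1.
by rewrite eqxx conjC1 !mul1r mulr1.
Qed.

Lemma tens_block_tensmx1l n (N : 'M[C]_n) : tens_block ((1%:M : 'M_1) *t N) 0 0 = N.
Proof. by rewrite tens_block_tensmx mxE eqxx scale1r. Qed.

Lemma eq_cp n m (f g : 'M[C]_n -> 'M[C]_m) :
  f =1 g -> completely_positive f -> completely_positive g.
Proof.
move=> fg f_cp k M M_psd; have <- : ampl f M = ampl g M.
  by apply: tens_blockP => i j; rewrite !tens_block_ampl fg.
exact: f_cp.
Qed.

Lemma cp_comp n m p (f : 'M[C]_n -> 'M[C]_m) (g : 'M[C]_m -> 'M[C]_p) :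
  completely_positive f -> completely_positive g ->
  completely_positive (fun X => g (f X)).
Proof.
move=> f_cp g_cp k M M_psd; have -> : ampl (fun X => g (f X)) M = ampl g (ampl f M).
  by apply: tens_blockP => i j; rewrite !tens_block_ampl.
exact/g_cp/f_cp.
Qed.

Lemma cp_congrmx n m (f : 'I_m -> 'I_n) (w : 'I_m -> C) : completely_positive (congrmx f w).
Proof.
move=> k M M_psd.
pose f' (r : 'I_(k * m)) := mxtens_index ((mxtens_unindex r).1, f (mxtens_unindex r).2).
have -> : ampl (congrmx f w) M = congrmx f' (fun r => w (mxtens_unindex r).2) M.
  apply: tens_blockP => i j; rewrite tens_block_ampl.
  by apply/matrixP => a b; rewrite !mxE /f' !mxtens_indexK.
exact: psd_congrmx.
Qed.

Lemma cp_scale n m (f : 'M[C]_n -> 'M[C]_m) c :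
  0 <= c -> completely_positive f -> completely_positive (fun X => c *: f X).
Proof.
move=> c_ge0 f_cp k M M_psd; have -> : ampl (fun X => c *: f X) M = c *: ampl f M.
  apply: tens_blockP => i j.
  by rewrite (linZ (tens_block_linear i j)) !tens_block_ampl.
exact/psdZ/f_cp.
Qed.

Lemma cp_psd n m (f : 'M[C]_n -> 'M[C]_m) N :
  completely_positive f -> psd N -> psd (f N).
Proof.
move=> f_cp N_psd; rewrite -(tens_block_tensmx1l N) -tens_block_ampl.
apply/psd_tens_block/f_cp; rewrite tensmx1l_congrmx.
exact: psd_congrmx.
Qed.

Lemma cp_tens_block m n i : completely_positive (fun M : 'M[C]_(m * n) => tens_block M i i).
Proof. by apply: eq_cp (cp_congrmx _ _) => M; rewrite tens_block_congrmx. Qed.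

Lemma cp_tensmx1l n : completely_positive (fun N : 'M[C]_n => (1%:M : 'M_1) *t N).
Proof. by apply: eq_cp (cp_congrmx _ _) => N; rewrite tensmx1l_congrmx. Qed.

End CompletelyPositiveMaps.

Section ProductResources.
Variable C : numClosedFieldType.

Definition prepare n (a : 'I_n) (N : 'M[C]_1) : 'M[C]_n := N 0 0 *: delta_mx a a.

Lemma prepare_resource n (a : 'I_n) tX : single_resource tX TC (prepare a).
Proof.
split.
- by move=> c N N'; rewrite /prepare !mxE scalerDl scalerA.
- apply: eq_cp (cp_congrmx (fun _ => 0) (fun r => (r == a)%:R)) => N.
  apply/matrixP => r s; rewrite !mxE rmorph_nat.
  by case: (r == a); case: (s == a); rewrite /= ?(mul0r, mulr0, mul1r, mulr1).
- by move=> N; rewrite mxtraceZ mxtrace_delta eqxx mulr1 trace_mx11.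
- move=> _ xi _ i j ij; rewrite !mxE.
  suff -> : (i == a) && (j == a) = false by rewrite mulr0.
  by apply: contraNF ij => /andP[/eqP -> /eqP ->].
- by move=> _ i j; rewrite [i]ord1 [j]ord1 eqxx.
Qed.

Lemma tens_map_trivial_l n dA dB (PhiA : 'M[C]_1 -> 'M[C]_dA) (PhiB : 'M[C]_n -> 'M[C]_dB)
    (M : 'M[C]_(1 * n)) :
  linear PhiB -> tens_map PhiA PhiB M = PhiA (delta_mx 0 0) *t PhiB (tens_block M 0 0).
Proof.
move=> PhiB_lin; have L := linear_comp PhiB_lin (tensmx_linear (PhiA (delta_mx 0 0))).
rewrite /tens_map !big_ord1 [in RHS](matrix_sum_delta (tens_block M 0 0)) (lin_sum L).
apply: eq_bigr => y _; rewrite (lin_sum L); apply: eq_bigr => y' _.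
by rewrite (linZ L) mxE.
Qed.

End ProductResources.

Section TrivialInputResource.
Variables (C : numClosedFieldType) (dY dA dB : nat) (tY tB : stype).
Variable R : 'M[C]_(1 * dY) -> 'M[C]_(dA * dB).
Hypotheses (R_res : resource TI tY TC tB R) (dY_gt0 : (0 < dY)%N).

Let R_lin : linear R. Proof. by case: R_res => -[]. Qed.
Let R_cp : completely_positive R. Proof. by case: R_res => -[]. Qed.

Let T (N : 'M[C]_dY) := R (1%:M *t N).
Let blk a N := tens_block (T N) a a.

Let T_linear : linear T.
Proof. exact: (linear_comp (tensmx_linear (1%:M : 'M[C]_1)) R_lin). Qed.

Let blk_linear a : linear (blk a).
Proof. exact: (linear_comp T_linear (tens_block_linear a a)). Qed.

Let blk_cp a : completely_positive (blk a).
Proof. exact (cp_comp (cp_comp (@cp_tensmx1l C dY) R_cp) (@cp_tens_block C dA dB a)). Qed.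

Let T_offdiag N a a' : a != a' -> tens_block (T N) a a' = 0.
Proof.
move=> aa'; move: N; apply: density_span.
  exact: (linear_comp T_linear (tens_block_linear a a')).
case: R_res => _ _ _ _ [ClA _ _ _] rho rho_density.
by apply/matrixP => b b'; rewrite !mxE (ClA erefl _ _ (density1 C) rho_density).
Qed.

Definition weight a := \tr (blk a (delta_mx (Ordinal dY_gt0) (Ordinal dY_gt0))).

Let mxtrace_blk_density a psi : density psi -> \tr (blk a psi) = weight a.
Proof.
case: R_res => _ _ _ NSB _ psi_density.
rewrite /weight /blk -!ptrB_tens_block /T.
by rewrite (NSB _ _ _ (density1 C) psi_density (density_delta C (Ordinal dY_gt0))).
Qed.

Let mxtrace_blk a N : \tr (blk a N) = weight a * \tr N.
Proof.
apply/eqP; rewrite -subr_eq0; apply/eqP; move: N.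
apply: (density_span (V := C^o)).
  move=> c N N'; rewrite (linD (blk_linear a)) (linZ (blk_linear a)) !mxtraceD !mxtraceZ.
  by rewrite -[c *: _]/(c * _); ring.
move=> rho rho_density; rewrite /= mxtrace_blk_density //.
have -> : \tr rho = 1 :> C^o := rho_density.2.
by rewrite mulr1 subrr.
Qed.

Lemma weight_ge0 a : 0 <= weight a.
Proof. by apply/mxtrace_psd_ge0/(cp_psd (blk_cp a))/(density_delta C _).1. Qed.

Lemma weight_sum1 : \sum_a weight a = 1.
Proof.
case: R_res => _ R_tr _ _ _.
by rewrite -(R_tr _ _ (density1 C) (density_delta C (Ordinal dY_gt0))) mxtrace_tens_block.
Qed.

Let blk_weight0 a N : weight a = 0 -> blk a N = 0.
Proof.
move=> wa0; move: N; apply: density_span => // rho [rho_psd tr_rho].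
by apply: psd_trace0; [exact: cp_psd (blk_cp a) rho_psd | rewrite mxtrace_blk wa0 mul0r].
Qed.

(* Blocks of zero weight vanish, so their channel may be borrowed from any block
   of positive weight. *)
Definition weight_support a :=
  if weight a != 0 then a else odflt a [pick a' | weight a' != 0].

Lemma weight_support_neq0 a : weight (weight_support a) != 0.
Proof.
rewrite /weight_support; case: ifP => // _; case: pickP => //= no_weight.
have := weight_sum1; rewrite big1 => [/eqP|a' _]; first by rewrite eq_sym oner_eq0.
by have /negbFE/eqP := no_weight a'.
Qed.

Definition bob_channel a (N : 'M[C]_dY) : 'M[C]_dB :=
  (weight (weight_support a))^-1 *: blk (weight_support a) N.

Lemma bob_channel_resource a : single_resource tY tB (bob_channel a).
Proof.
rewrite /bob_channel; have w_neq0 := weight_support_neq0 a.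
set a' := weight_support a in w_neq0 *.
case: R_res => _ _ _ _ [_ ClB _ ClY]; split.
- exact (linear_comp (blk_linear a') (scalemx_linear _)).
- by apply: cp_scale (blk_cp a'); rewrite invr_ge0 weight_ge0.
- by move=> N; rewrite mxtraceZ mxtrace_blk mulrA mulVf // mul1r.
- move=> tB_C xi xi_density i j ij.
  by rewrite !mxE (ClB tB_C _ _ (density1 C) xi_density) ?mulr0.
- move=> tY_C i j ij; suff -> : blk a' (delta_mx i j) = 0 by rewrite scaler0.
  by apply/matrixP => b b'; rewrite !mxE /T (ClY tY_C _ (density1 C)) ?mxE.
Qed.

Lemma R_decomposition M :
  R M = \sum_a weight a *: tens_map (prepare a) (bob_channel a) M.
Proof.
set N := tens_block M 0 0.
have -> : M = 1%:M *t N.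
  by apply: tens_blockP => i j; rewrite tens_block_tensmx [i]ord1 [j]ord1 mxE scale1r.
rewrite -/(T N) (tensmx_block_diag (T_offdiag N)); apply: eq_bigr => a _.
have [bob_lin _ _ _ _] := bob_channel_resource a.
rewrite tens_map_trivial_l // tens_block_tensmx1l /prepare mxE scale1r.
have [w0|w_neq0] := eqVneq (weight a) 0.
  by rewrite w0 scale0r -/(blk a N) blk_weight0 // tensmx0.
rewrite /bob_channel /weight_support w_neq0 (linZ (tensmx_linear _)) scalerA.
by rewrite mulfV // scale1r.
Qed.

Lemma trivial_input_resource_losr_free : losr_free TI tY TC tB R.
Proof.
exists dA, weight, (@prepare C dA), bob_channel; split.
- exact: weight_ge0.
- exact: weight_sum1.
- by move=> a; apply: prepare_resource.
- exact: bob_channel_resource.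
- exact: R_decomposition.
Qed.

End TrivialInputResource.

Unset Implicit Arguments.

Theorem proposition1 (C : numClosedFieldType) (dX dY dA dB : nat) (tY tB : stype) :
  wf_sys dX TI -> wf_sys dY tY -> wf_sys dA TC -> wf_sys dB tB ->
  T_trivial C dX dY dA dB TI tY TC tB.
Proof.
move=> [_ [dX1 _]] [dY_gt0 _] _ _ R R_res; have {}dX1 := dX1 erefl; subst dX.
exact: trivial_input_resource_losr_free R_res dY_gt0.
Qed.
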